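(* Let $\beta=\beta_1\cdots\beta_p$ be a finite word over $\{1,2\}$ and let $\theta=\theta_1\cdots\theta_{2r}$ ($r\ge 1$) be a finite word over $\{1,2\}$ of even length which is symmetric, i.e. $\theta_j=\theta_{2r+1-j}$ for all $j$. For infinite words $\omega_1=\omega_1(1)\omega_1(2)\cdots$ and $\omega_2=\omega_2(1)\omega_2(2)\cdots$ over $\{1,2\}$, let $\gamma=\gamma(\omega_1,\omega_2)\in\{1,2\}^{\mathbb{Z}}$ be the bi-infinite word $\omega_2^t\beta^t\,2\,\theta\,2\,\beta\,\omega_1$ (where ${}^t$ denotes reversal), indexed so that $\gamma_0=2$, $\gamma_j=\theta_j$ for $1\le j\le 2r$, $\gamma_{2r+1}=2$, $\gamma_{2r+1+j}=\beta_j$ for $1\le j\le p$, $\gamma_{2r+1+p+j}=\omega_1(j)$ for $j\ge1$, $\gamma_{-j}=\beta_j$ for $1\le j\le p$, and $\gamma_{-p-j}=\omega_2(j)$ for $j\ge 1$. Let $S$ be a set of infinite words over $\{1,2\}$ (for instance, those avoiding a given finite list of finite strings) such that for all $\omega_1,\omega_2\in S$ the Markov value $m(\gamma(\omega_1,\omega_2))=\sup_{n\in\mathbb{Z}}\lambda_n(\gamma(\omega_1,\omega_2))$ is attained at one of the two positions $0$ or $2r+1$ (the $2$'s adjacent to $\theta$), i.e. $m(\gamma)=\max\{\lambda_0(\gamma),\lambda_{2r+1}(\gamma)\}$. Then, among $\omega_1,\omega_2\in S$, the Markov value $m(\gamma(\omega_1,\omega_2))$ is minimal when $\omega_1=\omega_2=:\omega$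 and $[0;\beta,\omega]$ is minimal. Precisely: for all $\omega_1,\omega_2\in S$, $m(\gamma(\omega_1,\omega_2))\ge \max\{m(\gamma(\omega_1,\omega_1)),m(\gamma(\omega_2,\omega_2))\}$, and for $\omega,\omega'\in S$ with $[0;\beta,\omega]\le[0;\beta,\omega']$ one has $m(\gamma(\omega,\omega))\le m(\gamma(\omega',\omega'))$.
   Context: For $\underline{\alpha}=(\alpha_n)_{n\in\mathbb{Z}}\in\{1,2\}^{\mathbb{Z}}$ and $k\in\mathbb{Z}$, $\lambda_k(\underline{\alpha})=[\alpha_k;\alpha_{k+1},\alpha_{k+2},\dots]+[0;\alpha_{k-1},\alpha_{k-2},\dots]$, where $[b_0;b_1,b_2,\dots]=b_0+1/(b_1+1/(b_2+\cdots))$. For a finite word $\beta$ and infinite word $\omega$, $[0;\beta,\omega]$ denotes the continued fraction whose partial quotients are the letters of $\beta$ followed by those of $\omega$. *)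

From Stdlib Require Import Reals Lra Lia ZArith List Bool.
From Coquelicot Require Import Coquelicot.
Open Scope R_scope.

(* Infinite words: nat -> nat, 0-indexed (w 0 is the first letter).
   Bi-infinite words: Z -> nat.  Finite words: list nat. *)

Definition over12 (a : nat) : Prop := a = 1%nat \/ a = 2%nat.
Definition word12 (w : nat -> nat) : Prop := forall i, over12 (w i).
Definition fword12 (l : list nat) : Prop := List.Forall over12 l.

Fixpoint cf_fin (n : nat) (a : nat -> nat) : R :=
  match n with
  | O => INR (a O)
  | S n' => INR (a O) + / cf_fin n' (fun i => a (S i))
  end.

Definition cf (a : nat -> nat) : R := real (Lim_seq (fun n => cf_fin n a)).

Definition lambda (k : Z) (alpha : Z -> nat) : R :=
  cf (fun i => alpha (k + Z.of_nat i)%Z) + / cf (fun i => alpha (k - 1 - Z.of_nat i)%Z).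

Definition markov (alpha : Z -> nat) : R :=
  real (Lub_Rbar (fun x => exists k : Z, x = lambda k alpha)).

Definition wconcat (l : list nat) (w : nat -> nat) : nat -> nat :=
  fun i => if Nat.ltb i (length l) then nth i l 0%nat else w (i - length l)%nat.

Definition cf0 (beta : list nat) (w : nat -> nat) : R := / cf (wconcat beta w).

Definition gamma (beta theta : list nat) (w1 w2 : nat -> nat) (j : Z) : nat :=
  let p := Z.of_nat (length beta) in
  let t := Z.of_nat (length theta) in
  if (j =? 0)%Z then 2%nat
  else if ((1 <=? j) && (j <=? t))%Z then nth (Z.to_nat (j - 1)) theta 0%nat
  else if (j =? t + 1)%Z then 2%nat
  else if ((t + 1 <? j) && (j <=? t + 1 + p))%Z then nth (Z.to_nat (j - t - 2)) beta 0%nat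
  else if (t + 1 + p <? j)%Z then w1 (Z.to_nat (j - t - 2 - p))
  else if ((- p <=? j) && (j <=? -1))%Z then nth (Z.to_nat (- j - 1)) beta 0%nat
  else w2 (Z.to_nat (- j - p - 1)).

From Stdlib Require Import Reals ZArith List Lra Lia.
From Coquelicot Require Import Coquelicot.
Open Scope R_scope.

(* Put x_i = [0; beta, omega_i] and f(x) = [0; theta, 2 + x], so that f(x_i) = [0; theta, 2, beta, omega_i].
   Reading gamma forwards and backwards from positions 0 and 2r+1 (theta being symmetric) gives
   lambda_0 = 2 + f(x_1) + x_2 and lambda_(2r+1) = 2 + x_1 + f(x_2).  As theta has even length, f is
   nonincreasing, and as all partial quotients are at least 1, f is 1-Lipschitz.  Hence the diagonal
   value m(gamma(omega, omega)) = 2 + x + f(x) is nondecreasing in x, and when x_1 <= x_2 the term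
   2 + f(x_1) + x_2 dominates both diagonal values. *)

Lemma over12_INR a : over12 a -> 1 <= INR a <= 2.
Proof. intros [-> | ->]; simpl; lra. Qed.

Lemma Rabs_Rinv_sub_le u u' c :
  0 < c -> c <= u -> c <= u' -> Rabs (/ u - / u') <= Rabs (u - u') / (c * c).
Proof.
  intros Hc Hu Hu'.
  replace (/ u - / u') with ((u' - u) / (u * u')) by (field; lra).
  unfold Rdiv. rewrite Rabs_mult, Rabs_minus_sym.
  apply Rmult_le_compat_l; [apply Rabs_pos |].
  rewrite Rabs_inv, Rabs_right by nra.
  apply Rinv_le_contravar; nra.
Qed.

Lemma Rinv_bounds_1_3 u : 1 <= u <= 3 -> / 3 <= / u <= 1.
Proof. intros Hu; split; [| rewrite <- Rinv_1]; apply Rinv_le_contravar; lra. Qed.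

Lemma cf_fin_bounds n : forall a, word12 a -> 1 <= cf_fin n a <= 3.
Proof.
  induction n as [|n IH]; intros a Ha; simpl; pose proof (over12_INR _ (Ha 0%nat)); [lra |].
  assert (Hu : 1 <= cf_fin n (fun i => a (S i)) <= 3) by (apply IH; intros i; apply Ha).
  pose proof (Rinv_bounds_1_3 _ Hu). lra.
Qed.

Lemma cf_fin_S_ge n a : word12 a -> 4 / 3 <= cf_fin (S n) a.
Proof.
  intros Ha; simpl. pose proof (over12_INR _ (Ha 0%nat)).
  assert (Hu : 1 <= cf_fin n (fun i => a (S i)) <= 3) by (apply cf_fin_bounds; intros i; apply Ha).
  pose proof (Rinv_bounds_1_3 _ Hu). lra.
Qed.

Lemma cf_fin_S_sub n m a :
  cf_fin (S n) a - cf_fin (S m) a = / cf_fin n (fun i => a (S i)) - / cf_fin m (fun i => a (S i)).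
Proof. simpl. ring. Qed.

(* One step of the recursion need not contract, but two steps contract by [(3/4)^2],
   since all convergents past the first are at least [4/3]. *)
Lemma cf_fin_cauchy n : forall a k, word12 a ->
  Rabs (cf_fin (n + k) a - cf_fin n a) <= 2 * (3 / 4) ^ n.
Proof.
  induction n as [n IH] using lt_wf_ind; intros a k Ha.
  assert (Ha1 : word12 (fun i => a (S i))) by (intros i; apply Ha).
  destruct n as [|[|n]].
  - pose proof (cf_fin_bounds k a Ha); pose proof (cf_fin_bounds 0 a Ha).
    rewrite Nat.add_0_l, pow_O. unfold Rabs; destruct Rcase_abs; lra.
  - change (1 + k)%nat with (S k). rewrite cf_fin_S_sub.
    pose proof (Rinv_bounds_1_3 _ (cf_fin_bounds k _ Ha1)).
    pose proof (Rinv_bounds_1_3 _ (cf_fin_bounds 0 _ Ha1)).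
    rewrite pow_1. unfold Rabs; destruct Rcase_abs; lra.
  - assert (Ha2 : word12 (fun i => a (S (S i)))) by (intros i; apply Ha).
    change (S (S n) + k)%nat with (S (S (n + k))). rewrite cf_fin_S_sub.
    eapply Rle_trans; [apply (Rabs_Rinv_sub_le _ _ (4 / 3)); try lra; apply cf_fin_S_ge; auto |].
    rewrite cf_fin_S_sub.
    assert (Hstep : Rabs (/ cf_fin (n + k) (fun i => a (S (S i))) - / cf_fin n (fun i => a (S (S i))))
                    <= Rabs (cf_fin (n + k) (fun i => a (S (S i))) - cf_fin n (fun i => a (S (S i))))).
    { eapply Rle_trans; [apply (Rabs_Rinv_sub_le _ _ 1); try lra; apply cf_fin_bounds; auto |].
      lra. }
    pose proof (IH n ltac:(lia) _ k Ha2).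
    simpl pow. lra.
Qed.

Lemma cf_is_lim a : word12 a -> is_lim_seq (fun n => cf_fin n a) (cf a).
Proof.
  intros Ha.
  assert (Hex : ex_finite_lim_seq (fun n => cf_fin n a)).
  { apply ex_lim_seq_cauchy_corr. intros eps.
    destruct (pow_lt_1_zero (3 / 4) ltac:(rewrite Rabs_right; lra) (eps / 2))
      as [N HN]; [destruct eps; simpl; lra |].
    assert (Htail : forall n k, (N <= n)%nat -> Rabs (cf_fin (n + k) a - cf_fin n a) < eps).
    { intros n k Hn. eapply Rle_lt_trans; [apply cf_fin_cauchy; auto |].
      specialize (HN n Hn). rewrite Rabs_right in HN by (apply Rle_ge, pow_le; lra). lra. }
    exists N. intros n m Hn Hm.
    destruct (le_lt_dec n m).
    - replace m with (n + (m - n))%nat by lia. rewrite Rabs_minus_sym. auto.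
    - replace n with (m + (n - m))%nat by lia. auto. }
  destruct Hex as [l Hl]. unfold cf. rewrite (is_lim_seq_unique _ _ Hl). exact Hl.
Qed.

Lemma cf_bounds a : word12 a -> 1 <= cf a <= 3.
Proof.
  intros Ha. pose proof (cf_is_lim a Ha) as Hl. split.
  - apply (is_lim_seq_le (fun _ => 1) (fun n => cf_fin n a) 1 (cf a)); auto using is_lim_seq_const.
    intros n; apply cf_fin_bounds, Ha.
  - apply (is_lim_seq_le (fun n => cf_fin n a) (fun _ => 3) (cf a) 3); auto using is_lim_seq_const.
    intros n; apply cf_fin_bounds, Ha.
Qed.

Lemma cf_cons a : word12 a -> cf a = INR (a 0%nat) + / cf (fun i => a (S i)).
Proof.
  intros Ha.
  assert (Ha1 : word12 (fun i => a (S i))) by (intros i; apply Ha).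
  assert (Hl : is_lim_seq (fun n => cf_fin (S n) a) (INR (a 0%nat) + / cf (fun i => a (S i)))).
  { apply is_lim_seq_plus'; [apply is_lim_seq_const |].
    apply (is_lim_seq_inv _ (cf (fun i => a (S i)))); [apply cf_is_lim; auto |].
    pose proof (cf_bounds _ Ha1). intros E; injection E; lra. }
  apply (is_lim_seq_incr_1 (fun n => cf_fin n a)) in Hl.
  pose proof (is_lim_seq_unique _ _ Hl) as E1.
  pose proof (is_lim_seq_unique _ _ (cf_is_lim a Ha)) as E2.
  rewrite E1 in E2. injection E2; auto.
Qed.

Lemma cf_fin_ext n : forall a b, (forall i, a i = b i) -> cf_fin n a = cf_fin n b.
Proof.
  induction n as [|n IH]; intros a b H; simpl; rewrite H; [| rewrite (IH _ (fun i => b (S i)))]; auto.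
Qed.

Lemma cf_ext a b : (forall i, a i = b i) -> cf a = cf b.
Proof. intros H; unfold cf; f_equal; apply Lim_seq_ext; intros; apply cf_fin_ext, H. Qed.

Fixpoint cf_prefix (l : list nat) (y : R) : R :=
  match l with
  | nil => y
  | a :: l' => INR a + / cf_prefix l' y
  end.

Lemma cf_prefix_app l1 l2 y : cf_prefix (l1 ++ l2) y = cf_prefix l1 (cf_prefix l2 y).
Proof. induction l1 as [|a l1 IH]; simpl; congruence. Qed.

Lemma wconcat_word12 l w : fword12 l -> word12 w -> word12 (wconcat l w).
Proof.
  intros Hl Hw i. unfold wconcat. destruct (Nat.ltb_spec i (length l)); auto.
  apply (proj1 (Forall_forall _ _) Hl), nth_In; auto.
Qed.

Lemma cf_wconcat l w : fword12 l -> word12 w -> cf (wconcat l w) = cf_prefix l (cf w).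
Proof.
  intros Hl Hw; induction Hl as [|a l Ha Hl IH]; simpl.
  - apply cf_ext; intros i; unfold wconcat; simpl. rewrite Nat.sub_0_r; reflexivity.
  - rewrite cf_cons by (apply wconcat_word12; auto; constructor; auto).
    rewrite <- IH. reflexivity.
Qed.

Lemma cf_prefix_ge1 l y : fword12 l -> 1 <= y -> 1 <= cf_prefix l y.
Proof.
  intros Hl Hy; induction Hl as [|a l Ha Hl IH]; simpl; auto.
  pose proof (over12_INR _ Ha).
  assert (0 < / cf_prefix l y) by (apply Rinv_0_lt_compat; lra). lra.
Qed.

Lemma cf_prefix_lipschitz l y y' : fword12 l -> 1 <= y -> 1 <= y' ->
  Rabs (cf_prefix l y - cf_prefix l y') <= Rabs (y - y').
Proof.
  intros Hl Hy Hy'; induction Hl as [|a l Ha Hl IH]; simpl; [lra |].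
  pose proof (cf_prefix_ge1 l y Hl Hy); pose proof (cf_prefix_ge1 l y' Hl Hy').
  replace (INR a + / cf_prefix l y - (INR a + / cf_prefix l y'))
    with (/ cf_prefix l y - / cf_prefix l y') by ring.
  eapply Rle_trans; [apply (Rabs_Rinv_sub_le _ _ 1); lra |].
  unfold Rdiv; rewrite Rmult_1_r, Rinv_1, Rmult_1_r; exact IH.
Qed.

Lemma cf_prefix_monotone l y y' : fword12 l -> 1 <= y <= y' ->
  if Nat.even (length l) then cf_prefix l y <= cf_prefix l y' else cf_prefix l y' <= cf_prefix l y.
Proof.
  intros Hl Hy; induction Hl as [|a l Ha Hl IH]; cbn [cf_prefix length]; [simpl; lra |].
  pose proof (cf_prefix_ge1 l y Hl ltac:(lra)); pose proof (cf_prefix_ge1 l y' Hl ltac:(lra)).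
  rewrite Nat.even_succ, <- Nat.negb_even.
  destruct (Nat.even (length l)); simpl; apply Rplus_le_compat_l, Rinv_le_contravar; lra.
Qed.

Ltac decide_indices :=
  repeat (match goal with
  | |- context [Z.eqb ?a ?b] => destruct (Z.eqb_spec a b)
  | |- context [Z.leb ?a ?b] => destruct (Z.leb_spec a b)
  | |- context [Z.ltb ?a ?b] => destruct (Z.ltb_spec a b)
  | |- context [Nat.ltb ?a ?b] => destruct (Nat.ltb_spec a b)
  | |- context [Nat.eqb ?a ?b] => destruct (Nat.eqb_spec a b)
  end; cbn [andb orb]); try lia; try reflexivity.

Lemma nth_app_cons {A} (l m : list A) (x d : A) i :
  nth i (l ++ x :: m) d = if Nat.ltb i (length l) then nth i l d
    else if Nat.eqb i (length l) then x else nth (i - length l - 1) m d.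
Proof.
  destruct (Nat.ltb_spec i (length l)); [apply app_nth1; auto |].
  rewrite app_nth2 by auto. destruct (Nat.eqb_spec i (length l)).
  - subst. now rewrite Nat.sub_diag.
  - destruct (i - length l)%nat eqn:E; [lia |]. simpl. f_equal. lia.
Qed.

Section GammaTails.
Variables (beta theta : list nat) (w1 w2 : nat -> nat).

Lemma gamma_fwd_0 i :
  gamma beta theta w1 w2 (0 + Z.of_nat i) = wconcat (2%nat :: theta ++ 2%nat :: beta) w1 i.
Proof.
  unfold gamma, wconcat. cbn [length]. rewrite length_app. cbn [length].
  destruct i as [|i]; [reflexivity |].
  cbn [nth]. rewrite nth_app_cons. decide_indices; f_equal; lia.
Qed.

Lemma gamma_bwd_0 i : gamma beta theta w1 w2 (0 - 1 - Z.of_nat i) = wconcat beta w2 i.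
Proof. unfold gamma, wconcat. decide_indices; f_equal; lia. Qed.

Lemma gamma_fwd_end i :
  gamma beta theta w1 w2 (Z.of_nat (length theta + 1) + Z.of_nat i) = wconcat (2%nat :: beta) w1 i.
Proof.
  unfold gamma, wconcat. cbn [length].
  destruct i as [|i]; cbn [nth]; decide_indices; f_equal; lia.
Qed.

Hypothesis theta_sym :
  forall j, (j < length theta)%nat -> nth j theta 0%nat = nth (length theta - 1 - j) theta 0%nat.

Lemma gamma_bwd_end i :
  gamma beta theta w1 w2 (Z.of_nat (length theta + 1) - 1 - Z.of_nat i)
  = wconcat (theta ++ 2%nat :: beta) w2 i.
Proof.
  unfold gamma, wconcat. rewrite length_app. cbn [length]. rewrite nth_app_cons.
  decide_indices; try (f_equal; lia).
  rewrite theta_sym by lia. f_equal; lia.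
Qed.

End GammaTails.

(* [0; theta, 2, beta, omega] as a function of x = [0; beta, omega]. *)
Definition theta_tail (theta : list nat) (x : R) : R := / cf_prefix theta (2 + x).

Lemma cf0_nonneg beta w : fword12 beta -> word12 w -> 0 <= cf0 beta w.
Proof.
  intros Hb Hw. unfold cf0.
  pose proof (cf_bounds _ (wconcat_word12 _ _ Hb Hw)).
  apply Rlt_le, Rinv_0_lt_compat; lra.
Qed.

Lemma theta_tail_antitone theta x x' : fword12 theta -> Nat.even (length theta) = true ->
  0 <= x <= x' -> theta_tail theta x' <= theta_tail theta x.
Proof.
  intros Ht Heven Hx. unfold theta_tail.
  pose proof (cf_prefix_monotone theta (2 + x) (2 + x') Ht ltac:(lra)) as Hmono.
  rewrite Heven in Hmono.
  pose proof (cf_prefix_ge1 theta (2 + x) Ht ltac:(lra)).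
  apply Rinv_le_contravar; lra.
Qed.

Lemma theta_tail_lipschitz theta x x' : fword12 theta -> 0 <= x -> 0 <= x' ->
  Rabs (theta_tail theta x - theta_tail theta x') <= Rabs (x - x').
Proof.
  intros Ht Hx Hx'. unfold theta_tail.
  pose proof (cf_prefix_ge1 theta (2 + x) Ht ltac:(lra)).
  pose proof (cf_prefix_ge1 theta (2 + x') Ht ltac:(lra)).
  eapply Rle_trans; [apply (Rabs_Rinv_sub_le _ _ 1); lra |].
  unfold Rdiv; rewrite Rmult_1_r, Rinv_1, Rmult_1_r.
  replace (x - x') with (2 + x - (2 + x')) by ring.
  apply cf_prefix_lipschitz; auto; lra.
Qed.

Lemma Rmax_diag_le_cross (f : R -> R) x1 x2 :
  (forall x x', 0 <= x <= x' -> f x' <= f x) -> 0 <= x1 -> 0 <= x2 ->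
  Rmax (x1 + f x1) (x2 + f x2) <= Rmax (f x1 + x2) (x1 + f x2).
Proof.
  intros Hf H1 H2. destruct (Rle_dec x1 x2).
  - pose proof (Hf x1 x2 ltac:(lra)). unfold Rmax; repeat destruct Rle_dec; lra.
  - pose proof (Hf x2 x1 ltac:(lra)). unfold Rmax; repeat destruct Rle_dec; lra.
Qed.

Section Lambda.
Variables (beta theta : list nat) (w1 w2 : nat -> nat).
Hypotheses (Hb : fword12 beta) (Ht : fword12 theta) (Hw1 : word12 w1) (Hw2 : word12 w2).

Let fword12_2_beta : fword12 (2%nat :: beta).
Proof. constructor; [right |]; auto. Qed.

Let fword12_theta_2_beta : fword12 (theta ++ 2%nat :: beta).
Proof. apply Forall_app; auto. Qed.

Let fword12_2_theta_2_beta : fword12 (2%nat :: theta ++ 2%nat :: beta).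
Proof. constructor; [right |]; auto. Qed.

Lemma lambda_0_gamma :
  lambda 0 (gamma beta theta w1 w2) = 2 + theta_tail theta (cf0 beta w1) + cf0 beta w2.
Proof.
  unfold lambda, theta_tail, cf0.
  rewrite (cf_ext _ _ (gamma_fwd_0 beta theta w1 w2)), (cf_ext _ _ (gamma_bwd_0 beta theta w1 w2)).
  rewrite !cf_wconcat by auto.
  cbn [cf_prefix]. rewrite cf_prefix_app. cbn [cf_prefix].
  replace (INR 2) with 2 by (simpl; ring). reflexivity.
Qed.

Lemma lambda_end_gamma :
  (forall j, (j < length theta)%nat -> nth j theta 0%nat = nth (length theta - 1 - j) theta 0%nat) ->
  lambda (Z.of_nat (length theta + 1)) (gamma beta theta w1 w2)
  = 2 + cf0 beta w1 + theta_tail theta (cf0 beta w2).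
Proof.
  intros Hsym. unfold lambda, theta_tail, cf0.
  rewrite (cf_ext _ _ (gamma_fwd_end beta theta w1 w2)),
    (cf_ext _ _ (gamma_bwd_end beta theta w1 w2 Hsym)).
  rewrite !cf_wconcat by auto.
  rewrite cf_prefix_app. cbn [cf_prefix].
  replace (INR 2) with 2 by (simpl; ring). ring.
Qed.
End Lambda.

Theorem lemma2p1 (beta theta : list nat) (r : nat) (S : (nat -> nat) -> Prop) :
  fword12 beta ->
  fword12 theta ->
  (1 <= r)%nat ->
  length theta = (2 * r)%nat ->
  (forall j, (j < 2 * r)%nat -> nth j theta 0%nat = nth (2 * r - 1 - j) theta 0%nat) ->
  (forall w, S w -> word12 w) ->
  (forall w1 w2, S w1 -> S w2 ->
     markov (gamma beta theta w1 w2) =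
     Rmax (lambda 0 (gamma beta theta w1 w2))
          (lambda (Z.of_nat (2 * r + 1)) (gamma beta theta w1 w2))) ->
  (forall w1 w2, S w1 -> S w2 ->
     markov (gamma beta theta w1 w2) >=
     Rmax (markov (gamma beta theta w1 w1)) (markov (gamma beta theta w2 w2)))
  /\
  (forall w w', S w -> S w' -> cf0 beta w <= cf0 beta w' ->
     markov (gamma beta theta w w) <= markov (gamma beta theta w' w')).
Proof.
  intros Hb Ht _ Hlen Hsym HS Hmax.
  rewrite <- Hlen in Hsym, Hmax.
  assert (Hmarkov : forall w1 w2, S w1 -> S w2 -> markov (gamma beta theta w1 w2)
            = Rmax (2 + theta_tail theta (cf0 beta w1) + cf0 beta w2)
                   (2 + cf0 beta w1 + theta_tail theta (cf0 beta w2))).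
  { intros w1 w2 H1 H2.
    rewrite Hmax, lambda_0_gamma, lambda_end_gamma by auto. reflexivity. }
  assert (Hf_anti : forall x x', 0 <= x <= x' -> theta_tail theta x' <= theta_tail theta x).
  { intros x x'; apply theta_tail_antitone; auto.
    rewrite Hlen, Nat.even_mul; reflexivity. }
  split.
  - intros w1 w2 H1 H2. rewrite !Hmarkov by auto.
    pose proof (Rmax_diag_le_cross (theta_tail theta) (cf0 beta w1) (cf0 beta w2) Hf_anti
                  (cf0_nonneg _ _ Hb (HS _ H1)) (cf0_nonneg _ _ Hb (HS _ H2))).
    unfold Rmax in *; repeat destruct Rle_dec; lra.
  - intros w w' H H' Hle. rewrite !Hmarkov by auto.
    pose proof (cf0_nonneg _ _ Hb (HS _ H)) as Hx.
    pose proof (theta_tail_lipschitz theta _ _ Ht Hx (cf0_nonneg _ _ Hb (HS _ H'))) as Hlip.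
    rewrite (Rabs_minus_sym (cf0 beta w)), (Rabs_right (cf0 beta w' - cf0 beta w)) in Hlip by lra.
    pose proof (Rle_abs (theta_tail theta (cf0 beta w) - theta_tail theta (cf0 beta w'))).
    unfold Rmax; repeat destruct Rle_dec; lra.
Qed.
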